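(* If $n\ge3$ is an odd integer, then $\lambda(\mathbb{Z}/n\mathbb{Z})=\frac1n\log2$.
   Context: For a compact abelian group $G$ with normalized Haar measure $\mu$ and (multiplicative) dual group of characters $\widehat{G}$, let $\mathbb{Z}[\widehat{G}]$ denote the ring of integral linear combinations of characters, regarded as functions on $G$. For $f\in\mathbb{Z}[\widehat{G}]$, the logarithmic Mahler measure over $G$ is $\mathsf{m}_G(f)=\int_G\log|f|\,d\mu$ (with $\log 0=-\infty$). The Lehmer constant of $G$ is $\lambda(G)=\inf\{\mathsf{m}_G(f): f\in\mathbb{Z}[\widehat{G}],\ \mathsf{m}_G(f)>0\}$. Here $\mathbb{Z}/n\mathbb{Z}$ is the finite cyclic group with the uniform probability measure; its characters are $\chi_k(j)=e^{2\pi i jk/n}$, $k=0,\dots,n-1$. *)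

From HB Require Import structures.
From mathcomp Require Import all_boot all_order all_algebra.
From mathcomp Require Import all_classical all_reals all_analysis.
From mathcomp Require Import complex.
Set Implicit Arguments. Unset Strict Implicit. Unset Printing Implicit Defensive.
Import Order.TTheory GRing.Theory Num.Theory.
Local Open Scope ring_scope.

Section Lehmer.
Variable R : realType.

Definition chi (n : nat) (k j : 'I_n) : R[i] :=
  (cos (2 * pi * (j * k)%:R / n%:R) +i* sin (2 * pi * (j * k)%:R / n%:R))%C.

(* An element f = sum_k c_k chi_k of Z[hat(Z/nZ)], given by its integer
   coefficients c, evaluated at j in Z/nZ. *)
Definition zeval (n : nat) (c : 'I_n -> int) (j : 'I_n) : R[i] :=
  \sum_(k < n) (c k)%:~R * chi k j.

Definition elog (x : R) : \bar R := if x == 0 then -oo%E else (ln x)%:E.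

Definition mahlerZn (n : nat) (c : 'I_n -> int) : \bar R :=
  ((n%:R)^-1%:E * \sum_(j < n) elog (Normc.normc (zeval c j)))%E.

Definition lehmerZn (n : nat) : \bar R :=
  ereal_inf [set mahlerZn c | c in [set c : 'I_n -> int | (0 < mahlerZn c)%E]].

End Lehmer.

From HB Require Import structures.
From mathcomp Require Import all_boot all_order all_algebra.
From mathcomp Require Import all_classical all_reals all_analysis.
From mathcomp Require Import complex.
From mathcomp Require Import lra ring.
Set Implicit Arguments. Unset Strict Implicit. Unset Printing Implicit Defensive.
Import Order.TTheory GRing.Theory Num.Theory.
Local Open Scope ring_scope.

(* For f = sum_k c_k chi_k and w = exp(2 pi i / n), the values
   f(j) = sum_k c_k w^(jk) are the eigenvalues of the integer circulant matrix
   (c_(b-a))_(a,b), with the columns of the Vandermonde matrix of the powers of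
   w as eigenvectors.  Hence prod_j f(j) is an integer N and m(f) = log |N| / n,
   so m(f) > 0 forces |N| >= 2, i.e. m(f) >= log 2 / n.  For n odd the bound is
   attained by f = 1 + chi_1: evaluating X^n - 1 = prod_j (X - w^j) at X = -1
   gives prod_j (1 + w^j) = 2. *)

Definition circulant (T : Type) n (c : 'I_n.+1 -> T) : 'M[T]_n.+1 :=
  \matrix_(a, b) c (b - a).

Lemma map_circulant (T U : Type) (f : T -> U) n (c : 'I_n.+1 -> T) :
  map_mx f (circulant c) = circulant (f \o c).
Proof. by apply/matrixP => a b; rewrite !mxE. Qed.

Lemma det_circulant (F : idomainType) n (w : F) (c : 'I_n.+1 -> F) :
  n.+1.-primitive_root w ->
  \prod_(j < n.+1) \sum_(k < n.+1) c k * w ^+ (j * k) = \det (circulant c).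
Proof.
move=> prim_w.
set f := fun j : 'I_n.+1 => \sum_k c k * w ^+ (j * k).
set V := Vandermonde n.+1 (\row_(j < n.+1) w ^+ j).
have circulant_eigen : circulant c *m V = V *m diag_mx (\row_j f j).
  apply/matrixP => a j; rewrite mul_mx_diag !mxE (reindex_inj (addrI a)) /=.
  rewrite /f mulr_sumr; apply: eq_bigr => k _.
  rewrite !mxE [a + k]addrC addrK.
  have wj_order : (w ^+ j) ^+ n.+1 = 1.
    by rewrite exprAC (prim_expr_order prim_w) expr1n.
  have -> : ((k + a)%R : nat) = ((k + a) %% n.+1)%N by [].
  rewrite expr_mod // exprD exprM; ring.
have detV_neq0 : \det V != 0.
  rewrite det_Vandermonde; apply/prodf_neq0 => i _; apply/prodf_neq0 => j ij.
  rewrite !mxE subr_eq0 (eq_prim_root_expr prim_w) !modn_small //.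
  by rewrite eq_sym neq_ltn ij.
have := congr1 determinant circulant_eigen; rewrite !det_mulmx det_diag.
rewrite [X in _ = X]mulrC => /(mulIf detV_neq0) ->.
by apply: eq_bigr => j _; rewrite mxE.
Qed.

Lemma prod_1addX_prim_root (F : fieldType) n (w : F) :
  odd n -> n.-primitive_root w -> \prod_(j < n) (1 + w ^+ j) = 2.
Proof.
move=> odd_n prim_w.
have := congr1 (horner^~ (-1)) (factor_Xn_sub_1 prim_w).
rewrite horner_prod big_mkord hornerD hornerN hornerXn hornerC.
under eq_bigr do rewrite hornerXsubC -opprD.
by rewrite prodrN card_ord -signr_odd odd_n expr1 mulN1r -opprD => /oppr_inj.
Qed.

Section MahlerZn.
Variable R : realType.
Local Open Scope complex_scope.

Definition expi (t : R) : R[i] := cos t +i* sin t.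

Lemma expiD a b : expi (a + b) = expi a * expi b.
Proof. by rewrite /expi /= cosD sinD; simpc; congr (_ +i* _); rewrite addrC. Qed.

Lemma expiMn t k : expi (t *+ k) = expi t ^+ k.
Proof.
elim: k => [|k IH]; first by rewrite /expi mulr0n expr0 cos0 sin0.
by rewrite mulrS expiD IH exprS.
Qed.

Lemma cos_mulr2n_neq1 (y : R) : 0 < y < pi -> cos (y *+ 2) != 1.
Proof.
move=> y_gt0_ltpi; rewrite cos_mulr2n; apply/negP => /eqP cos2y.
have : `|cos y| == 1.
  by rewrite -sqr_norm_eq1; apply/eqP; move: cos2y; rewrite mulr2n; lra.
rewrite norm_cos_eq1 => /eqP.
by move: (sin_gt0_pi y_gt0_ltpi) => /gt_eqF/eqP.
Qed.

Lemma expi_prim_root n : (0 < n)%N -> n.-primitive_root (expi (2 * pi / n%:R)).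
Proof.
move=> n_gt0; have n_neq0 : (n%:R : R) != 0 by rewrite pnatr_eq0 -lt0n.
apply/andP; split=> //; apply/forallP => i; rewrite unity_rootE -expiMn.
have [->|i1_neq_n] := eqVneq i.+1 n.
  rewrite eqb_id -(mulr_natr (2 * pi / n%:R)) divfK //.
  by rewrite /expi (mulr_natl pi 2) cos2pi sin2pi.
have i1_lt_n : (i.+1 < n)%N by rewrite ltn_neqAle i1_neq_n ltn_ord.
rewrite eqbF_neg; apply/negP => /eqP [cos_eq1 _].
pose y : R := pi * (i.+1%:R / n%:R).
have y_gt0_ltpi : 0 < y < pi.
  rewrite mulr_gt0 ?pi_gt0 ?divr_gt0 ?ltr0n //= -[ltRHS]mulr1.
  by rewrite ltr_pM2l ?pi_gt0 // ltr_pdivrMr ?ltr0n // mul1r ltr_nat.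
have : (2 * pi / n%:R) *+ i.+1 = y *+ 2.
  by rewrite -(mulr_natr (2 * pi / _)) -(mulr_natr y) /y; field.
by move/(congr1 cos); rewrite cos_eq1 => /esym/eqP; apply/negP/cos_mulr2n_neq1.
Qed.

Lemma chiE n (k j : 'I_n) : chi R k j = expi (2 * pi / n%:R) ^+ (j * k).
Proof.
by rewrite /chi -expiMn /expi -(mulr_natr (2 * pi / n%:R)) mulrAC natrM.
Qed.

Lemma elogM (x y : R) : 0 <= x -> 0 <= y -> elog (x * y) = (elog x + elog y)%E.
Proof.
rewrite /elog => x_ge0 y_ge0.
have [->|x_neq0] := eqVneq x 0; first by rewrite mul0r eqxx.
have [->|y_neq0] := eqVneq y 0; first by rewrite mulr0 eqxx addeC.
rewrite mulf_eq0 (negbTE x_neq0) (negbTE y_neq0) /=.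
by rewrite lnM // posrE lt_def ?x_neq0 ?y_neq0.
Qed.

Lemma elog_prod (I : finType) (F : I -> R) : (forall i, 0 <= F i) ->
  (\sum_i elog (F i))%E = elog (\prod_i F i).
Proof.
move=> F_ge0.
suff [] : (\sum_i elog (F i))%E = elog (\prod_i F i) /\ 0 <= \prod_i F i by [].
apply: (big_ind2 (fun a b => a = elog b /\ 0 <= b)).
- by rewrite /elog oner_eq0 ln1.
- by move=> a1 b1 a2 b2 [-> b1_ge0] [-> b2_ge0]; rewrite elogM ?mulr_ge0.
- by [].
Qed.

Lemma normc_real (x : R) : Normc.normc (x%:C) = `|x|.
Proof. by rewrite /Normc.normc /= expr0n addr0 sqrtr_sqr. Qed.

Lemma normc_int (d : int) : Normc.normc (d%:~R : R[i]) = `|d|%:~R.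
Proof. by rewrite -(rmorph_int (real_complex R)) normc_real intr_norm. Qed.

Lemma mahlerZnE n (c : 'I_n -> int) :
  mahlerZn R c = ((n%:R)^-1%:E * elog (Normc.normc (\prod_j zeval R c j)%R))%E.
Proof.
rewrite /mahlerZn elog_prod; last first.
  by move=> j; case: (zeval _ _) => a b; apply: sqrtr_ge0.
by rewrite (big_morph _ (@Normc.normcM R) (@Normc.normc1 R)).
Qed.

Lemma prod_zeval_circulant n (c : 'I_n.+1 -> int) :
  \prod_j zeval R c j = (\det (circulant c))%:~R.
Proof.
rewrite -det_map_mx map_circulant.
rewrite -(det_circulant _ (expi_prim_root (ltn0Sn n))).
by apply: eq_bigr => j _; apply: eq_bigr => k _; rewrite chiE.
Qed.

Lemma mahlerZn_nat n (c : 'I_n.+1 -> int) :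
  exists N : nat, mahlerZn R c = ((n.+1%:R)^-1%:E * elog N%:R)%E.
Proof.
exists `|\det (circulant c)|%N.
by rewrite mahlerZnE prod_zeval_circulant normc_int natr_absz.
Qed.

Lemma mahlerZn_gt0_ge_ln2 n (c : 'I_n.+1 -> int) :
  (0 < mahlerZn R c)%E -> ((ln (2 : R) / n.+1%:R)%:E <= mahlerZn R c)%E.
Proof.
have [N ->] := mahlerZn_nat c; rewrite /elog pnatr_eq0.
have n1_inv_gt0 : (0 : R) < n.+1%:R^-1 by rewrite invr_gt0 ltr0n.
case: N => [|[|N]] /=.
- by rewrite mulrNy gtr0_sg // mul1e.
- by rewrite ln1 mule0 ltxx.
- move=> _; rewrite -EFinM lee_fin mulrC ler_pM2l //.
  by rewrite ler_ln ?posrE ?ltr0n // ler_nat.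
Qed.

Definition one_add_chi1 n (k : 'I_n.+2) : int := (val k == 0%N) + (val k == 1%N).

Lemma mahlerZn_one_add_chi1 n : odd n.+2 ->
  mahlerZn R (@one_add_chi1 n) = (ln (2 : R) / n.+2%:R)%:E.
Proof.
move=> odd_n2.
have zevalE j : zeval R (@one_add_chi1 n) j = 1 + expi (2 * pi / n.+2%:R) ^+ j.
  rewrite /zeval !big_ord_recl big1 => [|k _]; last first.
    by rewrite /one_add_chi1 mul0r.
  by rewrite /one_add_chi1 !chiE /bump /= muln0 muln1 expr0 !mulr1z !mul1r addr0.
rewrite mahlerZnE (eq_bigr _ (fun j _ => zevalE j)).
rewrite (prod_1addX_prim_root odd_n2 (expi_prim_root _)) //.
rewrite -(rmorph_nat (real_complex R) 2) normc_real ger0_norm //.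
by rewrite /elog pnatr_eq0 /= -EFinM mulrC.
Qed.

End MahlerZn.

Theorem corollary4p7 (R : realType) (n : nat) :
  (3 <= n)%N -> odd n -> lehmerZn R n = (ln (2 : R) / n%:R)%:E.
Proof.
case: n => [|[|m]] // _ odd_n.
have ln2_div_gt0 : (0 : R) < ln 2 / m.+2%:R.
  by rewrite divr_gt0 ?ltr0n // ln_gt0 // ltr1n.
apply/eqP; rewrite eq_le; apply/andP; split.
- apply: ereal_inf_lbound; exists (@one_add_chi1 m).
    by rewrite /= mahlerZn_one_add_chi1 // lte_fin.
  exact: mahlerZn_one_add_chi1.
- by apply: le_ereal_inf_tmp => _ [c /= c_gt0 <-]; apply: mahlerZn_gt0_ge_ln2.
Qed.
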